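(* Let $X$ be a real Banach space and let $C \subset X$ be a closed, convex and bounded set with $0 \in \mathrm{int}(C)$. Let $\{x_n\}_{n \in \mathbb{N}}$ be a dense subset of the boundary $\partial C$ of $C$ such that for every $n$ there is exactly one functional $f_n \in X^*$ with $\|f_n\| = 1$ supporting $C$ at $x_n$; i.e. $f_n(x_n) = d_n$ and $f_n(v) \le d_n$ for all $v \in C$. Put $D_n = \{x \in X : f_n(x) \le d_n\}$. Then $C = \bigcap_{n \in \mathbb{N}} D_n$. *)

From HB Require Import structures.
From mathcomp Require Import all_boot all_order all_algebra.
From mathcomp Require Import all_classical all_reals all_analysis.
Set Implicit Arguments. Unset Strict Implicit. Unset Printing Implicit Defensive.
Import Order.TTheory GRing.Theory Num.Theory.
Import numFieldNormedType.Exports.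
Local Open Scope classical_set_scope.
Local Open Scope ring_scope.

Definition lin_functional (R : realType) (X : normedModType R) (f : X -> R) :=
  forall (a : R) (u v : X), f (a *: u + v) = a * f u + f v.

Definition dual_elt (R : realType) (X : normedModType R) (f : X -> R) :=
  lin_functional f /\ continuous f.

Definition dual_norm (R : realType) (X : normedModType R) (f : X -> R) : R :=
  sup [set `|f x| | x in [set x : X | `|x| <= 1]].

Definition bdry (R : realType) (X : normedModType R) (C : set X) : set X :=
  closure C `\` interior C.

(* f supports C at x with value d = f x: f x = d and f v <= d on C. *)
Definition supports (R : realType) (X : normedModType R) (C : set X)
    (f : X -> R) (x : X) :=
  x \in C /\ forall v, C v -> f v <= f x.

(* If y lies outside C, let t y be the last point of C on the segment [0, y];
   it lies on the boundary, so some x_n is within (1 - t) r / 2 of it, where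
   the ball of radius r about 0 lies in C.  That ball forces
   f_n (x_n) >= r / 2, and f_n y <= f_n (x_n) gives
   f_n (x_n - t y) >= (1 - t) f_n (x_n) >= (1 - t) r / 2, contradicting
   ||f_n|| = 1. *)

From HB Require Import structures.
From mathcomp Require Import all_boot all_order all_algebra.
From mathcomp Require Import all_classical all_reals all_analysis.
Import Order.TTheory GRing.Theory Num.Theory.
Import numFieldNormedType.Exports.
Local Open Scope classical_set_scope.
Local Open Scope ring_scope.
Set Implicit Arguments. Unset Strict Implicit.

Section LinearFunctional.
Variables (R : realType) (X : normedModType R) (f : X -> R).
Hypothesis f_lin : lin_functional f.

Lemma lin_functional_linear : linear f.
Proof. by move=> a u v; rewrite f_lin. Qed.

HB.instance Definition _ :=
  GRing.isLinear.Build R X R *:%R f lin_functional_linear.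

Lemma supports_ge_dual_norm (C : set X) (x : X) (s : R) : 0 < s ->
  (forall z, `|z| <= s -> C z) -> supports C f x -> s * dual_norm f <= f x.
Proof.
move=> s0 ballC [_ fxC]; rewrite mulrC -ler_pdivlMr //.
apply: ge_sup; first by exists `|f 0|, 0 => //=; rewrite normr0.
move=> _ [u /= u1 <-]; rewrite ler_pdivlMr // -[s](ger0_norm (ltW s0)) -normrM.
have sC (w : X) : `|w| <= 1 -> C (s *: w).
  by move=> w1; apply: ballC; rewrite normrZ gtr0_norm // ler_piMr // ltW.
rewrite mulrC -linearZ /=; case: (ler0P (f (s *: u))) => _.
- by rewrite -linearN -scalerN; apply/fxC/sC; rewrite normrN.
- exact/fxC/sC.
Qed.

Hypothesis f_cont : continuous f.

Lemma le_dual_norm (u : X) : `|u| <= 1 -> `|f u| <= dual_norm f.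
Proof.
move=> u1; apply: ub_le_sup; last by exists u.
have /(bounded_funP f).2 /(_ 1) [M fM] :=
  (linear_bounded_continuous f).2 f_cont.
by exists M => _ [v /= v1 <-]; exact: fM.
Qed.

Lemma le_dual_normM (v : X) : `|f v| <= dual_norm f * `|v|.
Proof.
have [->|v0] := eqVneq v 0; first by rewrite linear0 !normr0 mulr0.
have nv0 : 0 < `|v| by rewrite normr_gt0.
have -> : `|f v| = `|v| * `|f (`|v|^-1 *: v)|.
  by rewrite linearZ normrM normfV normr_id mulrA divff ?mul1r ?gt_eqF.
rewrite mulrC ler_wpM2r // le_dual_norm //.
by rewrite normrZ normfV normr_id mulVf ?gt_eqF.
Qed.

Lemma supporting_le_dist (x y : X) (t : R) : 0 <= t -> f y <= f x ->
  (1 - t) * f x <= dual_norm f * `|x - t *: y|.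
Proof.
move=> t0 fyx; apply: le_trans (le_dual_normM _); apply: le_trans (ler_norm _).
by rewrite linearB linearZ /= mulrBl mul1r lerD2l lerN2 ler_wpM2l.
Qed.

End LinearFunctional.

Lemma segment_meets_bdry (R : realType) (X : normedModType R) (C : set X)
    (y : X) :
  closed C -> C 0 -> ~ C y -> exists2 t : R, 0 <= t < 1 & bdry C (t *: y).
Proof.
move=> Ccl C0 nCy.
pose S := [set s : R | s <= 1 /\ C (s *: y)].
have S0 : S 0 by split; rewrite ?ler01 ?scale0r.
have supS : has_sup S by split; [exists 0 | exists 1 => s []].
have Scl : closed S.
  apply: closedI; first exact: closed_le.
  by apply: preimage_closed => // s _; exact: scalel_continuous.
pose t := sup S.
have [t_le1 Cty] : S t by apply: Scl; apply: closure_sup; case: supS.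
have t_lt1 : t < 1.
  rewrite lt_neqAle t_le1 andbT; apply/eqP => t1.
  by apply: nCy; rewrite -[y]scale1r -t1.
exists t; first by rewrite (sup_upper_bound supS S0) t_lt1.
split; first exact: subset_closure.
move=> /scalel_continuous Cnear.
near t^'+ => s.
have : s <= t.
  apply: sup_upper_bound => //; split; near: s.
    exact: nbhs_right_le.
  by apply: cvg_within.
rewrite leNgt; apply/negP/negPn; near: s; exact: nbhs_right_gt.
Unshelve. all: by end_near. Qed.

Theorem lemma12 (R : realType) (X : completeNormedModType R) (C : set X)
  (x : nat -> X) (f : nat -> X -> R) :
  closed C -> convex_set C -> bounded_set C -> interior C 0 ->
  (forall n, bdry C (x n)) ->
  bdry C `<=` closure (range x) ->
  (forall n, dual_elt (f n) /\ dual_norm (f n) = 1 /\ supports C (f n) (x n)) ->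
  (forall n (g : X -> R), dual_elt g -> dual_norm g = 1 ->
     supports C g (x n) -> g = f n) ->
  C = \bigcap_n [set y | f n y <= f n (x n)].
Proof.
move=> Ccl _ _ C0 _ x_dense f_supp _.
apply/seteqP; split=> [v Cv n _|y Dy]; first exact: (f_supp n).2.2.2.
apply: contrapT => nCy.
have [r r0 ballC] := nbhs_norm0P.1 C0.
have r20 : 0 < r / 2 by rewrite divr_gt0.
have fx_ge n : r / 2 <= f n (x n).
  have [[f_lin _] [f_norm f_supp_n]] := f_supp n.
  have := supports_ge_dual_norm f_lin r20 _ f_supp_n.
  rewrite f_norm mulr1; apply=> z z_le; apply: ballC.
  by rewrite /= (le_lt_trans z_le) // ltr_pdivrMr // ltr_pMr // ltr1n.
have [t /andP[t0 t1] ty_bdry] := segment_meets_bdry Ccl (nbhs_singleton C0) nCy.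
have eps0 : 0 < (1 - t) * (r / 2) by rewrite mulr_gt0 // subr_gt0.
have [_ [[n _ <-]]] := x_dense _ ty_bdry _ (nbhsx_ballx (t *: y) _ eps0).
rewrite -ball_normE /= distrC; apply/negP; rewrite -leNgt.
have [[f_lin f_cont] [f_norm _]] := f_supp n.
have := supporting_le_dist f_lin f_cont t0 (Dy n I); rewrite f_norm mul1r.
by apply: le_trans; rewrite ler_wpM2l // subr_ge0 ltW.
Qed.
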